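(* Let $H$ be a finite non-cyclic subgroup of $\mathrm{GL}(2,\mathbb{C})$ and $L:\mathcal{A}_2\to\mathrm{GL}(2,\mathbb{C})$ the linear-part morphism. Then the derived subgroup of $L^{-1}(H)=H\ltimes\mathbb{C}^2$ equals $D(H)\ltimes\mathbb{C}^2=L^{-1}(D(H))$.
   Context: $\mathcal{A}_2$ is the group of affine automorphisms $v\mapsto Mv+w$ of $\mathbb{C}^2$ ($M\in\mathrm{GL}(2,\mathbb{C})$, $w\in\mathbb{C}^2$), $L(v\mapsto Mv+w)=M$, and $\mathbb{C}^2\subseteq\mathcal{A}_2$ denotes the subgroup of translations. $D(H)$ denotes the subgroup generated by all commutators $ghg^{-1}h^{-1}$ of elements of $H$. *)

(* Complex numbers are R[i] = complex R for R : realType. *)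
From mathcomp Require Import all_boot all_algebra.
From mathcomp Require Import complex reals.
Set Implicit Arguments. Unset Strict Implicit. Unset Printing Implicit Defensive.
Import GRing.Theory.
Local Open Scope ring_scope.

Inductive genby (T : Type) (mul : T -> T -> T) (inv : T -> T) (one : T)
    (S : T -> Prop) : T -> Prop :=
| genby_base x : S x -> genby mul inv one S x
| genby_one : genby mul inv one S one
| genby_mul x y : genby mul inv one S x -> genby mul inv one S y ->
    genby mul inv one S (mul x y)
| genby_inv x : genby mul inv one S x -> genby mul inv one S (inv x).

Section Groups.
Variable C : comUnitRingType.

Definition gl_mul (A B : 'M[C]_2) : 'M[C]_2 := A *m B.
Definition gl_inv (A : 'M[C]_2) : 'M[C]_2 := invmx A.
Definition gl_one : 'M[C]_2 := 1%:M.

Definition is_GL2_subgroup (H : 'M[C]_2 -> Prop) : Prop :=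
  [/\ forall A, H A -> A \in unitmx,
      H gl_one,
      forall A B, H A -> H B -> H (gl_mul A B)
    & forall A, H A -> H (gl_inv A)].

Definition finite_set (H : 'M[C]_2 -> Prop) : Prop :=
  exists s : seq 'M[C]_2, forall A, H A <-> A \in s.

Definition cyclic_GL2 (H : 'M[C]_2 -> Prop) : Prop :=
  exists g : 'M[C]_2, forall A, H A <-> genby gl_mul gl_inv gl_one (eq g) A.

Definition gl_comm (A B : 'M[C]_2) : 'M[C]_2 :=
  gl_mul (gl_mul A B) (gl_mul (gl_inv A) (gl_inv B)).

Definition derived_GL2 (H : 'M[C]_2 -> Prop) : 'M[C]_2 -> Prop :=
  genby gl_mul gl_inv gl_one
    (fun X => exists A B, [/\ H A, H B & X = gl_comm A B]).

(* The affine group A_2: (M, w) stands for v |-> M v + w, with M in GL(2,C). *)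
Definition aff := ('M[C]_2 * 'cV[C]_2)%type.
Definition aff_L (g : aff) : 'M[C]_2 := g.1.
(* composition (f o g)(v) = f(g(v)) *)
Definition aff_mul (f g : aff) : aff := (f.1 *m g.1, f.1 *m g.2 + f.2).
Definition aff_inv (f : aff) : aff := (invmx f.1, - (invmx f.1 *m f.2)).
Definition aff_one : aff := (1%:M, 0).
Definition aff_comm (f g : aff) : aff :=
  aff_mul (aff_mul f g) (aff_mul (aff_inv f) (aff_inv g)).

Definition aff_preimage (H : 'M[C]_2 -> Prop) : aff -> Prop :=
  fun g => H (aff_L g).

Definition derived_aff (G : aff -> Prop) : aff -> Prop :=
  genby aff_mul aff_inv aff_one
    (fun x => exists f g, [/\ G f, G g & x = aff_comm f g]).

End Groups.

(* The commutator of a linear map A with the translation by x is the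
   translation by A x - x, and D(H) sits inside D(L^-1(H)) as linear maps; so it suffices
   that the images of the A - 1, A in H, span C^2.  Otherwise some nonzero
   covector phi is fixed by all of H.  An element of determinant 1 fixing phi
   has trace 2 by Cayley-Hamilton, hence is unipotent, and if it has finite
   order it is the identity (characteristic 0).  So det embeds the finite
   group H into C^*, and H is cyclic. *)

From HB Require Import structures.
From mathcomp Require Import all_boot all_algebra all_fingroup all_solvable complex reals.
Set Implicit Arguments. Unset Strict Implicit. Unset Printing Implicit Defensive.
Import GRing.Theory Num.Theory.
Local Open Scope ring_scope.

Lemma char_poly2 (R : comNzRingType) (A : 'M[R]_2) :
  char_poly A = 'X^2 - (\tr A)%:P * 'X + (\det A)%:P.
Proof.
have szA := size_char_poly A.
apply/polyP => -[|[|[|k]]]; rewrite ?coefD ?coefN ?coefXn ?coefCM ?coefX ?coefC /=;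
  rewrite ?mulr0 ?mulr1 ?subr0 ?sub0r ?addr0 ?add0r.
- by rewrite char_poly_det sqrrN expr1n mul1r.
- by rewrite (char_poly_trace A).
- by have := monicP (char_poly_monic A); rewrite lead_coefE szA.
- by rewrite nth_default ?szA.
Qed.

Lemma Cayley_Hamilton2 (R : comNzRingType) (A : 'M[R]_2) :
  A ^+ 2 - \tr A *: A + (\det A)%:M = 0.
Proof.
have := Cayley_Hamilton A; rewrite char_poly2 rmorphD rmorphB !rmorphM /=.
have trA : (\tr A)%:M * A = \tr A *: A by rewrite -mul_scalar_mx.
by rewrite horner_mx_X !horner_mx_C trA expr2.
Qed.

Lemma trace_fix_covector (R : idomainType) (A : 'M[R]_2) (phi : 'rV[R]_2) :
  phi != 0 -> phi *m A = phi -> \tr A = 1 + \det A.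
Proof.
move=> phi_neq0 phiA; have := congr1 (mulmx phi) (Cayley_Hamilton2 A).
rewrite mulmx0 !mulmxDr mulmxN -scalemxAr mul_mx_scalar expr2 -mulmxE.
rewrite mulmxA !phiA -{1}[phi]scale1r -!scalerBl -scalerDl.
move/eqP; rewrite scalemx_eq0 (negbTE phi_neq0) orbF => /eqP.
by move/eqP; rewrite addrAC subr_eq0 => /eqP ->.
Qed.

Lemma det1_fix_covector_sqr (R : idomainType) (A : 'M[R]_2) (phi : 'rV[R]_2) :
  phi != 0 -> phi *m A = phi -> \det A = 1 -> (A - 1) ^+ 2 = 0.
Proof.
move=> phi_neq0 phiA detA; have := Cayley_Hamilton2 A.
by rewrite (trace_fix_covector phi_neq0 phiA) detA sqrrB1 scalerDl scale1r -mulr2n.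
Qed.

Lemma expr1D_sqr0 (R : pzRingType) (N : R) k :
  N ^+ 2 = 0 -> (1 + N) ^+ k = 1 + N *+ k.
Proof.
move=> N2; elim: k => [|k IHk]; first by rewrite expr0 mulr0n addr0.
rewrite exprS IHk mulrDr mulr1 mulrDl mul1r mulrnAr -expr2 N2 mul0rn addr0.
by rewrite mulrS addrA.
Qed.

Lemma det1_torsion_fix_covector_eq1 (F : numFieldType) (A : 'M[F]_2) (phi : 'rV[F]_2) k :
  phi != 0 -> phi *m A = phi -> \det A = 1 -> (0 < k)%N -> A ^+ k = 1 -> A = 1.
Proof.
move=> phi_neq0 phiA detA k_gt0.
have N2 := det1_fix_covector_sqr phi_neq0 phiA detA.
rewrite -[A](addrNK 1) addrC expr1D_sqr0 // => /(canRL (addKr 1)); rewrite addNr.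
move/eqP; rewrite -scaler_nat scalemx_eq0 pnatr_eq0 eqn0Ngt k_gt0 /= => /eqP ->.
by rewrite addr0.
Qed.

Section FiniteMatrixGroup.
Variables (R : comUnitRingType) (n : nat) (s : seq 'M[R]_n).
Hypotheses (s1 : 1%:M \in s) (sM : forall A B, A \in s -> B \in s -> A *m B \in s)
  (sV : forall A, A \in s -> invmx A \in s) (s_unit : forall A, A \in s -> A \in unitmx).

(* The finite group structure on [s] lets [field_mul_group_cyclic] apply. *)
Definition mxseq_group := seq_sub s.
HB.instance Definition _ := Finite.on mxseq_group.
Definition mxseq_mul (A B : mxseq_group) : mxseq_group := SeqSub (sM (ssvalP A) (ssvalP B)).
Definition mxseq_one : mxseq_group := SeqSub s1.
Definition mxseq_inv (A : mxseq_group) : mxseq_group := SeqSub (sV (ssvalP A)).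

Lemma mxseq_mulA : associative mxseq_mul.
Proof. by move=> A B C; apply: val_inj; rewrite /= mulmxA. Qed.
Lemma mxseq_mul1 : left_id mxseq_one mxseq_mul.
Proof. by move=> A; apply: val_inj; rewrite /= mul1mx. Qed.
Lemma mxseq_mulV : left_inverse mxseq_one mxseq_inv mxseq_mul.
Proof. by move=> A; apply: val_inj; rewrite /= mulVmx // s_unit // ssvalP. Qed.
HB.instance Definition _ :=
  Finite_isGroup.Build mxseq_group mxseq_mulA mxseq_mul1 mxseq_mulV.

Lemma val_mxseq_expg (A : mxseq_group) k : val (A ^+ k)%g = val A ^+ k.
Proof. by elim: k => [|k IHk] //; rewrite expgS exprS /= IHk. Qed.

Lemma mxseq_cyclic (K : fieldType) (f : 'M[R]_n -> K) :
    {in s &, {morph f : A B / A *m B >-> A * B}} -> f 1%:M = 1 ->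
    (forall A k, A \in s -> f A = 1 -> (0 < k)%N -> A ^+ k = 1 -> A = 1%:M) ->
  exists2 g, g \in s & {in s, forall A, exists k, A = g ^+ k}.
Proof.
move=> fM f1 f_inj.
have : cyclic [set: mxseq_group].
  apply: (@field_mul_group_cyclic _ _ _ (fun A : mxseq_group => f (val A))).
    by move=> A B _ _; rewrite /= fM ?ssvalP.
  move=> A _; split=> [fA1 | -> //]; apply: val_inj.
  by apply: (f_inj _ _ (ssvalP A) fA1 (order_gt0 A)); rewrite -val_mxseq_expg expg_order.
case/cyclicP=> g Dg; exists (val g); first exact: ssvalP.
move=> A sA; have : SeqSub sA \in <[g]>%g by rewrite -Dg inE.
by case/cycleP=> k /(congr1 val) /= ->; exists k; rewrite val_mxseq_expg.
Qed.

End FiniteMatrixGroup.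

Lemma nonfull_sumsmx_annihilator (F : fieldType) (I : finType) n (B_ : I -> 'M[F]_n) :
  ~~ row_full (\sum_i B_ i)%MS -> exists2 c : 'cV[F]_n, c != 0 & forall i, B_ i *m c = 0.
Proof.
set S := (\sum_i B_ i)%MS => S_nfull.
have /rowV0Pn[v /submxP[D ->] v_neq0] : (cokermx S)^T != 0.
  rewrite trmx_eq0; apply: contraNneq S_nfull => S0.
  by rewrite /row_full eqn_leq rank_leq_col -subn_eq0 -mxrank_coker S0 mxrank0.
exists (D *m (cokermx S)^T)^T; first by rewrite trmx_eq0.
move=> i; have /submxP[E ->] : (B_ i <= S)%MS by apply: (sumsmx_sup i).
by rewrite trmx_mul trmxK -mulmxA (mulmxA S) mulmx_coker mul0mx mulmx0.
Qed.

Lemma genby_morph (T U : Type) (mulT : T -> T -> T) (invT : T -> T) (oneT : T)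
    (mulU : U -> U -> U) (invU : U -> U) (oneU : U)
    (S : T -> Prop) (S' : U -> Prop) (f : T -> U) :
    {morph f : x y / mulT x y >-> mulU x y} -> {morph f : x / invT x >-> invU x} ->
    f oneT = oneU -> (forall x, S x -> S' (f x)) ->
  forall x, genby mulT invT oneT S x -> genby mulU invU oneU S' (f x).
Proof.
move=> fM fV f1 fS x; elim=> {x} [x /fS | | x y _ IHx _ IHy | x _ IHx].
- exact: genby_base.
- by rewrite f1; apply: genby_one.
- by rewrite fM; apply: genby_mul.
- by rewrite fV; apply: genby_inv.
Qed.

Section AffineGroup.
Variables (C : fieldType) (H : 'M[C]_2 -> Prop).

Lemma derived_aff_preimage_sub g :
  derived_aff (aff_preimage H) g -> aff_preimage (derived_GL2 H) g.
Proof.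
apply: genby_morph => // _ [f [g' [Hf Hg' ->]]].
by exists f.1, g'.1.
Qed.

Lemma derived_aff_linear M :
  derived_GL2 H M -> derived_aff (aff_preimage H) (M, 0).
Proof.
apply: (genby_morph (f := fun M => (M, 0))) => [A B | A | | _ [A [B [HA HB ->]]]].
- by rewrite /aff_mul /= mulmx0 addr0.
- by rewrite /aff_inv /= mulmx0 oppr0.
- by [].
exists (A, 0), (B, 0); split=> //.
by rewrite /aff_comm /aff_mul /aff_inv /= !(mulmx0, oppr0, addr0).
Qed.

Lemma aff_comm_translation (A : 'M[C]_2) (x : 'cV[C]_2) :
  A \in unitmx -> aff_comm (A, 0) (1%:M, x) = (1%:M, A *m x - x).
Proof.
move=> A_unit; rewrite /aff_comm /aff_mul /aff_inv /= invmx1.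
rewrite !(mulmx0, mul1mx, mulmx1, oppr0, addr0, add0r) mulmxV // mulmxN.
by rewrite mulmxN mulmxA mulmxV // mul1mx addrC.
Qed.

Hypothesis HG : is_GL2_subgroup H.

Lemma derived_aff_translation_sum (I : finType) (A_ : I -> 'M[C]_2) (w : 'cV[C]_2) :
    (forall i, H (A_ i)) -> (w^T <= \sum_i (A_ i - 1%:M)^T)%MS ->
  derived_aff (aff_preimage H) (1%:M, w).
Proof.
case: HG => H_unit H1 _ _ HA /sub_sumsmxP[u_ Dw].
rewrite -[w]trmxK {}Dw; elim/big_ind: _ => [| a b Da Db | i _].
- by rewrite trmx0; apply: genby_one.
- have -> : (1%:M, (a + b)^T) = aff_mul (1%:M, b^T) (1%:M, a^T).
    by rewrite /aff_mul /= !mul1mx linearD.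
  exact: genby_mul.
rewrite trmx_mul trmxK mulmxBl mul1mx -aff_comm_translation ?H_unit //.
by apply: genby_base; exists (A_ i, 0), (1%:M, (u_ i)^T); split; [exact: HA | exact: H1 |].
Qed.

End AffineGroup.

Lemma fix_covector_cyclic (F : numFieldType) (H : 'M[F]_2 -> Prop) (s : seq 'M[F]_2)
    (phi : 'rV[F]_2) :
    is_GL2_subgroup H -> (forall A, H A <-> A \in s) -> phi != 0 ->
    (forall A, H A -> phi *m A = phi) ->
  cyclic_GL2 H.
Proof.
case=> H_unit H1 HM HV Hs phi_neq0 phiH.
have [g sg Dg] : exists2 g, g \in s & {in s, forall A, exists k, A = g ^+ k}.
  apply: (@mxseq_cyclic _ _ s _ _ _ _ _ (@determinant F 2)).
  - exact/Hs.
  - by move=> A B /Hs HA /Hs HB; apply/Hs; apply: HM.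
  - by move=> A /Hs HA; apply/Hs; apply: HV.
  - by move=> A /Hs; apply: H_unit.
  - by move=> A B _ _; rewrite det_mulmx.
  - exact: det1.
  by move=> A k /Hs HA; apply: det1_torsion_fix_covector_eq1 phi_neq0 (phiH A HA).
exists g => A; split.
  move/Hs/Dg=> [k ->]; elim: k => [|k IHk]; first exact: genby_one.
  by rewrite exprS; apply: genby_mul IHk; apply: genby_base.
elim=> {A} [_ <- | | A B _ HA _ HB | A _ HA].
- exact/Hs.
- exact: H1.
- exact: HM.
- exact: HV.
Qed.

Lemma derived_aff_translations (R : realType) (H : 'M[R[i]]_2 -> Prop) :
    is_GL2_subgroup H -> finite_set H -> ~ cyclic_GL2 H ->
  forall w, derived_aff (aff_preimage H) (1%:M, w).
Proof.
move=> HG [s Hs] H_ncyc w.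
pose A_ (j : 'I_(size s)) := s`_j.
have HA j : H (A_ j) by apply/Hs; rewrite mem_nth.
have [S_full | S_nfull] := boolP (row_full (\sum_j (A_ j - 1%:M)^T)).
  exact: derived_aff_translation_sum HA (submx_full _ S_full).
have [c c_neq0 Ac] := nonfull_sumsmx_annihilator S_nfull.
case: H_ncyc; apply: (fix_covector_cyclic (phi := c^T) HG Hs); first by rewrite trmx_eq0.
move=> A /Hs sA; have jA : (index A s < size s)%N by rewrite index_mem.
have /(congr1 trmx) := Ac (Ordinal jA); rewrite /A_ /= nth_index //.
by rewrite trmx_mul trmxK trmx0 mulmxBr mulmx1 => /subr0_eq.
Qed.

Theorem lemma3p20 (R : realType) (H : 'M[R[i]]_2 -> Prop) :
  is_GL2_subgroup H -> finite_set H -> ~ cyclic_GL2 H ->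
  forall g : aff R[i],
    derived_aff (aff_preimage H) g <-> aff_preimage (derived_GL2 H) g.
Proof.
move=> HG H_fin H_ncyc g; split; first exact: derived_aff_preimage_sub.
case: g => M w /derived_aff_linear DM.
have -> : (M, w) = aff_mul (1%:M, w) (M, 0) by rewrite /aff_mul /= mul1mx mulmx0 add0r.
exact: genby_mul (derived_aff_translations HG H_fin H_ncyc w) DM.
Qed.
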